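(* Let $\eta$ be a (sufficiently regular, e.g. classical) solution of the uniformly compressing curve-shortening flow described below and let $M(t)=\frac12\int_0^1|\eta(t,s)|^2\,ds$ be its $L^2$-mass. Then $\partial_t M(t)=-1$.
   Context: $\mathbb S^1=\mathbb R/\mathbb Z$, $d\ge2$, $L(\eta)=\int_0^1|\partial_s\eta|\,ds$. The flow: $\eta:[0,t^\ast)\times\mathbb S^1\to\mathbb R^d$ with $\int_0^1\eta(t,s)\,ds=0$ and $|\partial_s\eta(t,s)|=L(t)>0$ for all $(t,s)$, satisfying $\partial_t\eta=L(t)^{-2}\partial_s(\tilde\sigma\partial_s\eta)$, where $\tilde\sigma$ satisfies $\partial_{ss}\tilde\sigma-L^{-2}\tilde\sigma|\partial_{ss}\eta|^2=-L^{-2}\int_0^1\tilde\sigma|\partial_{ss}\eta|^2\,ds$ and $\int_0^1\tilde\sigma(t,s)\,ds=1$ for all $t$. *)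

From Stdlib Require Import Reals.
From Coquelicot Require Import Coquelicot.
Open Scope R_scope.

(* Vectors of R^d are represented as functions nat -> R; only the
   components i < d are meaningful. *)
Fixpoint sum_lt (n : nat) (f : nat -> R) : R :=
  match n with O => 0 | S m => sum_lt m f + f m end.

Definition sqnorm (d : nat) (v : nat -> R) : R := sum_lt d (fun i => v i ^ 2).
Definition vnorm (d : nat) (v : nat -> R) : R := sqrt (sqnorm d v).

Definition dt_ (eta : R -> R -> nat -> R) (i : nat) (t s : R) : R :=
  Derive (fun t' => eta t' s i) t.
Definition ds_ (eta : R -> R -> nat -> R) (i : nat) (t s : R) : R :=
  Derive (fun s' => eta t s' i) s.
Definition dss_ (eta : R -> R -> nat -> R) (i : nat) (t s : R) : R :=
  Derive (fun s' => ds_ eta i t s') s.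

Definition sds (sig : R -> R -> R) (t s : R) : R := Derive (fun s' => sig t s') s.
Definition sdss (sig : R -> R -> R) (t s : R) : R := Derive (fun s' => sds sig t s') s.

Definition curve_length (d : nat) (eta : R -> R -> nat -> R) (t : R) : R :=
  RInt (fun s => vnorm d (fun i => ds_ eta i t s)) 0 1.

Definition mass (d : nat) (eta : R -> R -> nat -> R) (t : R) : R :=
  / 2 * RInt (fun s => sqnorm d (eta t s)) 0 1.

(* Classical solution on [0, tstar) x S^1 of the uniformly compressing
   curve-shortening flow with tension sigma. S^1 = R/Z is encoded by
   1-periodicity in s. *)
Definition ucsf_classical_solution (d : nat) (tstar : Rbar)
    (eta : R -> R -> nat -> R) (sig : R -> R -> R) : Prop :=
  let L := curve_length d eta in
  (forall t s i, 0 <= t -> Rbar_lt t tstar ->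
      eta t (s + 1) i = eta t s i /\ sig t (s + 1) = sig t s) /\
  (forall t s i, 0 <= t -> Rbar_lt t tstar -> (i < d)%nat ->
      ex_derive (fun s' => eta t s' i) s /\
      ex_derive (fun s' => ds_ eta i t s') s /\
      ex_derive (fun s' => sig t s') s /\
      ex_derive (fun s' => sds sig t s') s /\
      ex_derive (fun s' => sig t s' * ds_ eta i t s') s) /\
  (forall t s i, 0 < t -> Rbar_lt t tstar -> (i < d)%nat ->
      ex_derive (fun t' => eta t' s i) t /\
      continuity_2d_pt (fun t' s' => eta t' s' i) t s /\
      continuity_2d_pt (fun t' s' => dt_ eta i t' s') t s /\
      continuity_2d_pt (fun t' s' => ds_ eta i t' s') t s /\
      continuity_2d_pt (fun t' s' => dss_ eta i t' s') t s /\
      continuity_2d_pt sig t s /\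
      continuity_2d_pt (fun t' s' => sds sig t' s') t s) /\
  (forall t i, 0 <= t -> Rbar_lt t tstar -> (i < d)%nat ->
      RInt (fun s => eta t s i) 0 1 = 0) /\
  (forall t s, 0 <= t -> Rbar_lt t tstar ->
      vnorm d (fun i => ds_ eta i t s) = L t /\ 0 < L t) /\
  (forall t s i, 0 < t -> Rbar_lt t tstar -> (i < d)%nat ->
      dt_ eta i t s = / (L t ^ 2) * Derive (fun s' => sig t s' * ds_ eta i t s') s) /\
  (forall t s, 0 <= t -> Rbar_lt t tstar ->
      sdss sig t s - / (L t ^ 2) * sig t s * sqnorm d (fun i => dss_ eta i t s)
      = - / (L t ^ 2) * RInt (fun u => sig t u * sqnorm d (fun i => dss_ eta i t u)) 0 1) /\
  (forall t, 0 <= t -> Rbar_lt t tstar -> RInt (fun s => sig t s) 0 1 = 1).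

(** Differentiating under the integral, [M'(t) = \int eta . d_t eta]. Substituting the flow
    equation and integrating by parts over one period, where periodicity kills the boundary
    terms, gives [M'(t) = - L^-2 \int sigma |d_s eta|^2]; since the speed [|d_s eta|] is
    constantly [L], this is [- \int sigma = -1]. *)

From Stdlib Require Import Reals Lra Lia.
From Coquelicot Require Import Coquelicot.
Open Scope R_scope.

Lemma sum_lt_ge0 n f : (forall i, 0 <= f i) -> 0 <= sum_lt n f.
Proof. intro Hf; induction n; simpl; [lra | specialize (Hf n); lra]. Qed.

Lemma sum_lt_ext n f g :
  (forall i, (i < n)%nat -> f i = g i) -> sum_lt n f = sum_lt n g.
Proof.
  intro Hfg; induction n; simpl; auto.
  rewrite IHn, Hfg by (intros; lia || (apply Hfg; lia)). reflexivity.
Qed.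

Lemma sum_lt_scal c n f : sum_lt n (fun i => c * f i) = c * sum_lt n f.
Proof. induction n; simpl; [ring | rewrite IHn; ring]. Qed.

Lemma sum_lt_opp n f : sum_lt n (fun i => - f i) = - sum_lt n f.
Proof. induction n; simpl; [ring | rewrite IHn; ring]. Qed.

Lemma is_RInt_sum_lt n (g : nat -> R -> R) (I : nat -> R) a b :
  (forall i, (i < n)%nat -> is_RInt (g i) a b (I i)) ->
  is_RInt (fun s => sum_lt n (fun i => g i s)) a b (sum_lt n I).
Proof.
  intro Hg; induction n; cbn [sum_lt].
  - rewrite <- (Rmult_0_r (b - a)) at 1. apply (is_RInt_const a b 0).
  - apply (is_RInt_plus (fun s => sum_lt n (fun i => g i s)) (g n)).
    + apply IHn; intros; apply Hg; lia.
    + apply Hg; lia.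
Qed.

Lemma continuous_Rmult {U : UniformSpace} (f g : U -> R) x :
  continuous f x -> continuous g x -> continuous (fun y => f y * g y) x.
Proof. exact (continuous_mult f g x). Qed.

Lemma continuous_sum_lt {U : UniformSpace} n (g : nat -> U -> R) x :
  (forall i, (i < n)%nat -> continuous (g i) x) ->
  continuous (fun y => sum_lt n (fun i => g i y)) x.
Proof.
  intro Hg; induction n; simpl.
  - apply continuous_const.
  - apply (continuous_plus (fun y => sum_lt n (fun i => g i y)) (g n)).
    + apply IHn; intros; apply Hg; lia.
    + apply Hg; lia.
Qed.

Lemma is_derive_sum_lt n (g : nat -> R -> R) g' x :
  (forall i, (i < n)%nat -> is_derive (g i) x (g' i)) ->
  is_derive (fun y => sum_lt n (fun i => g i y)) x (sum_lt n g').
Proof.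
  intro Hg; induction n; cbn [sum_lt].
  - exact (is_derive_const (K := R_AbsRing) 0 x).
  - apply (is_derive_plus (fun y => sum_lt n (fun i => g i y)) (g n)).
    + apply IHn; intros; apply Hg; lia.
    + apply Hg; lia.
Qed.

Lemma sqnorm_vnorm d v : sqnorm d v = vnorm d v ^ 2.
Proof.
  unfold vnorm. rewrite pow2_sqrt; [reflexivity |].
  apply sum_lt_ge0; intro; apply pow2_ge_0.
Qed.

Lemma is_derive_sqnorm d (v : R -> nat -> R) (v' : nat -> R) x :
  (forall i, (i < d)%nat -> is_derive (fun y => v y i) x (v' i)) ->
  is_derive (fun y => sqnorm d (v y)) x (2 * sum_lt d (fun i => v x i * v' i)).
Proof.
  intro Hv. rewrite <- sum_lt_scal. apply is_derive_sum_lt. intros i Hi.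
  replace (2 * (v x i * v' i)) with (INR 2 * v' i * v x i ^ Nat.pred 2)
    by (simpl; ring).
  apply is_derive_pow, Hv, Hi.
Qed.

Lemma continuity_2d_pt_continuous_snd F x y :
  continuity_2d_pt F x y -> continuous (F x) y.
Proof.
  intro HF. apply (continuous_comp_2 (fun _ : R => x) (fun s : R => s) F y).
  - apply continuous_const.
  - apply continuous_id.
  - now apply continuity_2d_pt_filterlim.
Qed.

Lemma Derive_periodic (f : R -> R) :
  (forall s, f (s + 1) = f s) -> ex_derive f 1 -> Derive f 1 = Derive f 0.
Proof.
  intros Hper Hf.
  rewrite (Derive_ext f (fun s => f (s + 1)) 0) by (intro; now rewrite Hper).
  rewrite (Derive_comp f (fun s => s + 1) 0).
  - replace (Derive (fun s => s + 1) 0) with 1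
      by (symmetry; apply is_derive_unique; auto_derive; auto; ring).
    rewrite Rplus_0_l; ring.
  - now rewrite Rplus_0_l.
  - auto_derive; auto.
Qed.

Lemma is_RInt_periodic_by_parts (f g f' g' : R -> R) J :
  f 1 = f 0 -> g 1 = g 0 ->
  (forall s, 0 <= s <= 1 -> is_derive f s (f' s)) ->
  (forall s, 0 <= s <= 1 -> is_derive g s (g' s)) ->
  (forall s, 0 <= s <= 1 -> continuous f' s) ->
  (forall s, 0 <= s <= 1 -> continuous g' s) ->
  is_RInt (fun s => f' s * g s) 0 1 J ->
  is_RInt (fun s => f s * g' s) 0 1 (- J).
Proof.
  intros Hf1 Hg1 Hf Hg Hf' Hg' HJ.
  assert (Hmin : Rmin 0 1 = 0) by (apply Rmin_left; lra).
  assert (Hmax : Rmax 0 1 = 1) by (apply Rmax_right; lra).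
  replace (- J) with (minus (minus (scal (f 1) (g 1)) (scal (f 0) (g 0))) J)
    by (rewrite Hf1, Hg1, minus_eq_zero; unfold minus; rewrite plus_zero_l; reflexivity).
  apply (is_RInt_scal_derive_r f g f' g'); rewrite ?Hmin, ?Hmax; assumption.
Qed.

Section ConstantSpeedFlow.

Variables (d : nat) (tstar : Rbar) (eta : R -> R -> nat -> R) (sig : R -> R -> R).
Hypothesis Hsol : ucsf_classical_solution d tstar eta sig.

Lemma is_derive_sqnorm_eta y s :
  0 < y -> Rbar_lt y tstar ->
  is_derive (fun u => sqnorm d (eta u s)) y
    (2 * sum_lt d (fun i => eta y s i * dt_ eta i y s)).
Proof.
  destruct Hsol as (_ & _ & Hregt & _).
  intros Hy Hyt. apply (is_derive_sqnorm d (fun u => eta u s)). intros i Hi.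
  apply Derive_correct, (Hregt y s i Hy Hyt Hi).
Qed.

Variable t : R.
Hypotheses (t_pos : 0 < t) (t_lt_tstar : Rbar_lt t tstar).

Lemma locally_time_interval : locally t (fun y => 0 < y /\ Rbar_lt y tstar).
Proof. apply (locally_interval _ t 0 tstar); simpl; auto. Qed.

Lemma sqnorm_ds_eta s :
  sqnorm d (fun i => ds_ eta i t s) = curve_length d eta t ^ 2.
Proof.
  destruct Hsol as (_ & _ & _ & _ & Hspeed & _).
  rewrite sqnorm_vnorm, (proj1 (Hspeed t s ltac:(lra) t_lt_tstar)). reflexivity.
Qed.

Definition tension_flux i s :=
  ds_ eta i t s * (/ curve_length d eta t ^ 2 * (sig t s * ds_ eta i t s)).

Lemma is_RInt_eta_dt_component i J :
  (i < d)%nat -> is_RInt (tension_flux i) 0 1 J ->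
  is_RInt (fun s => eta t s i * dt_ eta i t s) 0 1 (- J).
Proof.
  intros Hi HJ. assert (Ht : 0 <= t) by lra.
  destruct Hsol as (Hper & Hregs & Hregt & _ & _ & Hflow & _).
  destruct (Hper t 0 i Ht t_lt_tstar) as [Heta1 Hsig1]. rewrite Rplus_0_l in Heta1, Hsig1.
  apply (is_RInt_periodic_by_parts _
           (fun s => / curve_length d eta t ^ 2 * (sig t s * ds_ eta i t s))
           (fun s => ds_ eta i t s)); auto.
  - rewrite Hsig1. unfold ds_. rewrite Derive_periodic; auto.
    + intro s; exact (proj1 (Hper t s i Ht t_lt_tstar)).
    + exact (proj1 (Hregs t 1 i Ht t_lt_tstar Hi)).
  - intros s _. apply Derive_correct, (Hregs t s i Ht t_lt_tstar Hi).
  - intros s _. rewrite (Hflow t s i t_pos t_lt_tstar Hi).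
    apply is_derive_scal, Derive_correct, (Hregs t s i Ht t_lt_tstar Hi).
  - intros s _. apply continuity_2d_pt_continuous_snd, (Hregt t s i t_pos t_lt_tstar Hi).
  - intros s _. apply continuity_2d_pt_continuous_snd, (Hregt t s i t_pos t_lt_tstar Hi).
Qed.

Lemma is_RInt_eta_dot_dt :
  is_RInt (fun s => sum_lt d (fun i => eta t s i * dt_ eta i t s)) 0 1 (-1).
Proof.
  assert (Ht : 0 <= t) by lra.
  destruct Hsol as (_ & _ & Hregt & _ & Hspeed & _ & _ & Hnorm).
  assert (HL : 0 < curve_length d eta t) by exact (proj2 (Hspeed t 0 Ht t_lt_tstar)).
  assert (Hflux : forall i, (i < d)%nat ->
            is_RInt (tension_flux i) 0 1 (RInt (tension_flux i) 0 1)).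
  { intros i Hi. apply (RInt_correct (V := R_CompleteNormedModule)).
    apply (ex_RInt_continuous (V := R_CompleteNormedModule)). intros s _.
    destruct (Hregt t s i t_pos t_lt_tstar Hi) as (_ & _ & _ & Cds & _ & Csig & _).
    apply continuity_2d_pt_continuous_snd in Cds, Csig.
    apply continuous_Rmult; [exact Cds |].
    apply continuous_Rmult; [apply continuous_const |].
    now apply continuous_Rmult. }
  (* |d_s eta| = L turns the total flux into sigma itself *)
  assert (Hflux_sig : forall s, sum_lt d (fun i => tension_flux i s) = sig t s).
  { intro s. unfold tension_flux.
    rewrite (sum_lt_ext _ _ (fun i => / curve_length d eta t ^ 2 * sig t s
                                      * ds_ eta i t s ^ 2)) by (intros; ring).
    rewrite sum_lt_scal. fold (sqnorm d (fun i => ds_ eta i t s)).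
    rewrite sqnorm_ds_eta. field. lra. }
  assert (Hsum : sum_lt d (fun i => RInt (tension_flux i) 0 1) = 1).
  { transitivity (RInt (fun s => sig t s) 0 1); [| exact (Hnorm t Ht t_lt_tstar)].
    symmetry. apply is_RInt_unique.
    eapply is_RInt_ext; [intros s _; apply Hflux_sig |].
    apply is_RInt_sum_lt, Hflux. }
  replace (-1) with (- sum_lt d (fun i => RInt (tension_flux i) 0 1))
    by (rewrite Hsum; ring).
  rewrite <- sum_lt_opp. apply is_RInt_sum_lt. intros i Hi.
  now apply is_RInt_eta_dt_component, Hflux.
Qed.

Lemma continuity_2d_pt_Derive_sqnorm_eta s :
  continuity_2d_pt (fun u v => Derive (fun z => sqnorm d (eta z v)) u) t s.
Proof.
  destruct Hsol as (_ & _ & Hregt & _).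
  apply continuity_2d_pt_filterlim.
  change (continuous
            (fun z : R * R => Derive (fun u => sqnorm d (eta u (snd z))) (fst z)) (t, s)).
  apply (continuous_ext_loc _ (fun z : R * R =>
           2 * sum_lt d (fun i => eta (fst z) (snd z) i * dt_ eta i (fst z) (snd z)))).
  - eapply filter_imp; [| exact (continuous_fst t s _ locally_time_interval)].
    intros z [Hz Hzt]. symmetry. apply is_derive_unique, is_derive_sqnorm_eta; auto.
  - apply continuous_Rmult; [apply continuous_const |].
    apply continuous_sum_lt. intros i Hi.
    destruct (Hregt t s i t_pos t_lt_tstar Hi) as (_ & Ceta & Cdt & _).
    apply continuity_2d_pt_filterlim in Ceta, Cdt.
    now apply continuous_Rmult.
Qed.

Lemma is_derive_mass l :
  is_RInt (fun s => sum_lt d (fun i => eta t s i * dt_ eta i t s)) 0 1 l ->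
  is_derive (mass d eta) t l.
Proof.
  destruct Hsol as (_ & _ & Hregt & _).
  intro Hl. unfold mass.
  replace l with (scal (/ 2) (2 * l)) by (unfold scal; simpl; unfold mult; simpl; field).
  apply (is_derive_scal (fun y => RInt (fun s => sqnorm d (eta y s)) 0 1)).
  replace (2 * l) with (RInt (fun s => Derive (fun u => sqnorm d (eta u s)) t) 0 1).
  2: { apply is_RInt_unique. apply (is_RInt_scal _ _ _ 2) in Hl.
       eapply is_RInt_ext; [| exact Hl].
       intros s _. symmetry. apply is_derive_unique, is_derive_sqnorm_eta; auto. }
  apply is_derive_RInt_param.
  - eapply filter_imp; [| exact locally_time_interval]. intros y [Hy Hyt] s _.
    eexists; apply is_derive_sqnorm_eta; auto.
  - intros s _. apply continuity_2d_pt_Derive_sqnorm_eta.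
  - eapply filter_imp; [| exact locally_time_interval]. intros y [Hy Hyt].
    apply (ex_RInt_continuous (V := R_CompleteNormedModule)). intros s _.
    apply continuous_sum_lt. intros i Hi.
    destruct (Hregt y s i Hy Hyt Hi) as (_ & Ceta & _).
    apply continuity_2d_pt_continuous_snd in Ceta. simpl.
    apply continuous_Rmult; [exact Ceta |].
    apply continuous_Rmult; [exact Ceta | apply continuous_const].
Qed.

End ConstantSpeedFlow.

Theorem proposition2p6 (d : nat) (tstar : Rbar)
    (eta : R -> R -> nat -> R) (sig : R -> R -> R) :
  (2 <= d)%nat ->
  Rbar_lt 0 tstar ->
  ucsf_classical_solution d tstar eta sig ->
  forall t : R, 0 < t -> Rbar_lt t tstar ->
    is_derive (mass d eta) t (-1).
Proof.
  intros _ _ Hsol t Ht Htstar.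
  apply (is_derive_mass d tstar eta sig Hsol t Ht Htstar).
  exact (is_RInt_eta_dot_dt d tstar eta sig Hsol t Ht Htstar).
Qed.
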